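(* For every base $\mathscr{B}$, finite multisets of atoms $P,S$ and atom $q$: $P,S\vdash_{\mathscr{B}}q$ if and only if $P\Vdash^{S}_{\mathscr{B}}q$.
   Context: Fix a countably infinite set $\mathbb{A}$ of atoms. IMLL formulas: $\varphi::= p\in\mathbb{A}\mid\varphi\otimes\varphi\mid \mathrm{I}\mid\varphi\multimap\varphi$. Collections are finite multisets; ''$,$'' denotes multiset union. An atomic rule is $(P_1\triangleright p_1,\dots,P_n\triangleright p_n)\Rightarrow p$ ($n\ge0$, $P_i$ finite multisets of atoms); a base is a set of atomic rules. Derivability $\vdash_{\mathscr{B}}$ is the least relation with (Ref) $[p]\vdash_{\mathscr{B}}p$; (App) if $(P_1\triangleright p_1,\dots,P_n\triangleright p_n)\Rightarrow p\in\mathscr{B}$ and $S_i,P_i\vdash_{\mathscr{B}}p_i$ for all $i$, then $S_1,\dots,S_n\vdash_{\mathscr{B}}p$. Support: (At) $\Vdash^{P}_{\mathscr{B}}p$ iff $P\vdash_{\mathscr{B}}p$; ($\otimes$) $\Vdash^{P}_{\mathscr{B}}\varphi\otimes\psi$ iff for every $\mathscr{X}\supseteq\mathscr{B}$, multiset of atoms $U$, atom $p$, if $\varphi,\psi\Vdash^{U}_{\mathscr{X}}p$ then $\Vdash^{P,U}_{\mathscr{X}}p$; ($\mathrm{I}$) $\Vdash^{P}_{\mathscr{B}}\mathrm{I}$ iff for every $\mathscr{X}\supseteq\mathscr{B}$, $U$, $p$, if $\Vdash^{U}_{\mathscr{X}}p$ then $\Vdash^{P,U}_{\mathscr{X}}p$;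 ($\multimap$) $\Vdash^{P}_{\mathscr{B}}\varphi\multimap\psi$ iff $\varphi\Vdash^{P}_{\mathscr{B}}\psi$; (comma) for nonempty $\Gamma,\Delta$, $\Vdash^{P}_{\mathscr{B}}\Gamma,\Delta$ iff $P=U,V$ for some $U,V$ with $\Vdash^{U}_{\mathscr{B}}\Gamma$, $\Vdash^{V}_{\mathscr{B}}\Delta$ (singleton $[\varphi]$ supported iff $\varphi$ is); (Inf) for nonempty $\Gamma$, $\Gamma\Vdash^{P}_{\mathscr{B}}\varphi$ iff for every $\mathscr{X}\supseteq\mathscr{B}$ and $U$, if $\Vdash^{U}_{\mathscr{X}}\Gamma$ then $\Vdash^{P,U}_{\mathscr{X}}\varphi$; for empty $\Gamma$ it means $\Vdash^{P}_{\mathscr{B}}\varphi$. Here a multiset of atoms $P$ on the left of $\Vdash$ is viewed as a multiset of atomic formulas. *)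

From mathcomp Require Import all_boot.
Set Implicit Arguments. Unset Strict Implicit. Unset Printing Implicit Defensive.

(* Atoms: the countably infinite set nat.  Finite multisets of atoms are
   represented by sequences; multiset union "," is concatenation, and
   multiset equality is perm_eq. *)
Definition atom := nat.

(* Atomic rule (P_1 |> p_1, ..., P_n |> p_n) => p. *)
Record rule := Rule { prems : seq (seq atom * atom); concl : atom }.

Definition base := rule -> Prop.

Definition ext (B X : base) : Prop := forall r, B r -> X r.

Inductive derivable (B : base) : seq atom -> atom -> Prop :=
| der_ref (p : atom) : derivable B [:: p] p
| der_app (r : rule) (Ss : seq (seq atom)) (S : seq atom) :
    B r -> size Ss = size (prems r) ->
    (forall i, i < size (prems r) ->
       derivable B (nth [::] Ss i ++ (nth ([::], 0) (prems r) i).1)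
                   (nth ([::], 0) (prems r) i).2) ->
    perm_eq S (flatten Ss) ->
    derivable B S (concl r).

Inductive form : Type :=
| Atom of atom
| Tens of form & form
| One
| Lolli of form & form.

Fixpoint sup (B : base) (P : seq atom) (phi : form) {struct phi} : Prop :=
  match phi with
  | Atom p => derivable B P p
  | Tens a b =>
      forall (X : base) (U : seq atom) (p : atom), ext B X ->
        (* a, b ⊩^U_X p *)
        (forall (Y : base) (W : seq atom), ext X Y ->
           (exists U1 U2, perm_eq W (U1 ++ U2) /\ sup Y U1 a /\ sup Y U2 b) ->
           derivable Y (U ++ W) p) ->
        derivable X (P ++ U) p
  | One =>
      forall (X : base) (U : seq atom) (p : atom), ext B X ->
        derivable X U p -> derivable X (P ++ U) p
  | Lolli a b =>
      (* a ⊩^P_B b *)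
      forall (X : base) (U : seq atom), ext B X -> sup X U a -> sup X (P ++ U) b
  end.

(* Support of a nonempty multiset of formulas (comma clause);
   the empty case is never used for support itself. *)
Fixpoint sup_ctx (B : base) (P : seq atom) (G : seq form) : Prop :=
  match G with
  | [::] => P = [::]
  | [:: phi] => sup B P phi
  | phi :: G' => exists U V, perm_eq P (U ++ V) /\ sup B U phi /\ sup_ctx B V G'
  end.

Definition inf (B : base) (P : seq atom) (G : seq form) (phi : form) : Prop :=
  match G with
  | [::] => sup B P phi
  | _ :: _ => forall (X : base) (U : seq atom), ext B X -> sup_ctx X U G ->
                sup X (P ++ U) phi
  end.

From mathcomp Require Import all_boot.
Set Implicit Arguments. Unset Strict Implicit.
From Stdlib Require Import Lia.
From mathcomp Require Import zify.

(* Supporting an atomic context [P] is nothing but having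
   derivations of the atoms of [P] from a splitting of the supplied atoms,
   so the theorem reduces to three structural properties of derivability:
   - [der_perm]: contexts are multisets (invariance under permutation);
   - [der_mono]: derivations survive the extension of the base;
   - [der_cut]: cut is admissible, i.e. a derivation of [p] from [V] can be
     plugged into one hypothesis [p] of another derivation.
   Left to right, given [P, S ⊢_B q], an extension [X] of [B] and derivations
   of the atoms of [P] from a splitting of [U], we cut the hypotheses [P] one
   at a time ([derivable_of_sup_ctx]) and obtain [S, U ⊢_X q].  Right to left,
   we instantiate the inference with [X := B] and [U := P], whose support is
   witnessed by the reflexivity derivations ([sup_ctx_refl]). *)

Lemma der_perm B G q : derivable B G q -> forall G', perm_eq G G' -> derivable B G' q.
Proof.
case=> [p|r Ss S Br Hs Hi Hp] G' HG.
- have -> : G' = [:: p] by apply/esym/perm_small_eq; rewrite // -(perm_size HG).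
  exact: der_ref.
- apply: (der_app (Ss := Ss)) => //; rewrite perm_sym in HG; exact: perm_trans HG Hp.
Qed.

Lemma der_mono B X G q : ext B X -> derivable B G q -> derivable X G q.
Proof.
move=> hX; elim=> [p|r Ss S Br Hs _ IH Hp]; first exact: der_ref.
exact: der_app (hX _ Br) Hs IH Hp.
Qed.

Lemma count_flatten_set_nth (T : Type) (a : pred T) (Ss : seq (seq T)) j t :
  j < size Ss ->
  count a (flatten (set_nth [::] Ss j t)) + count a (nth [::] Ss j) =
  count a t + count a (flatten Ss).
Proof.
elim: Ss j => [|s Ss IH] [|j] //= lt_j; rewrite !count_cat; first lia.
by rewrite -addnA IH // addnCA.
Qed.

(* In the (App) case the
   hypothesis [p] lives in one block [s] of the conclusion context, and only
   the premise using that block is rewritten. *)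
Lemma der_cut X C q : derivable X C q ->
  forall p G V, perm_eq C (p :: G) -> derivable X V p -> derivable X (V ++ G) q.
Proof.
elim=> [p0|r Ss S Br Hs Hi IH HS] p G V HC HV.
- have G0 : G = [::] by apply/size0nil; have := perm_size HC => /= [[]].
  have <- : p = p0 by apply/eqP; rewrite -mem_seq1 (perm_mem HC) mem_head.
  by rewrite G0 cats0.
- have /flattenP [s sSs ps] : p \in flatten Ss
    by rewrite -(perm_mem HS) (perm_mem HC) mem_head.
  set j := index s Ss.
  have lt_j : j < size Ss by rewrite index_mem.
  have Ss_j : nth [::] Ss j = s by rewrite nth_index.
  set Ss' := set_nth [::] Ss j (V ++ rem p s).
  have Hs' : size Ss' = size (prems r) by rewrite size_set_nth -Hs; apply/maxn_idPr.
  apply: (der_app Br Hs').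
  + move=> i lt_i; rewrite nth_set_nth /=; case: eqP => [->|_]; last exact: Hi.
    rewrite -catA; apply: IH HV; first by rewrite -Hs.
    by rewrite Ss_j -cat_cons perm_cat2r perm_to_rem.
  + (* multiset count: the new union is the old one with [p] traded for [V] *)
    rewrite /Ss'; apply/permP => a.
    have := count_flatten_set_nth a (V ++ rem p s) lt_j.
    move/permP: (perm_to_rem ps) => /(_ a) /=.
    move/permP: HS => /(_ a); move/permP: HC => /(_ a) /=.
    rewrite /atom Ss_j !count_cat; lia.
Qed.

Lemma sup_ctx_cons X U p P : sup_ctx X U (Atom p :: map Atom P) ->
  exists U1 V, perm_eq U (U1 ++ V) /\ derivable X U1 p /\ sup_ctx X V (map Atom P).
Proof.
case: P => [|a P] /=.
- by move=> H; exists U, [::]; rewrite cats0.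
- by case=> U1 [V [H1 [H2 H3]]]; exists U1, V.
Qed.

Lemma derivable_of_sup_ctx X P S U q : sup_ctx X U (map Atom P) ->
  derivable X (P ++ S) q -> derivable X (S ++ U) q.
Proof.
elim: P S U => [|p P IH] S U; first by move=> /= ->; rewrite cats0.
move=> /sup_ctx_cons [U1 [V [HU [HU1 HV]]]] HD.
have HD1 : derivable X (U1 ++ (P ++ S)) q by apply: der_cut HD _ _ _ _ HU1.
have HD2 : derivable X (P ++ (S ++ U1)) q.
  by apply: (der_perm HD1); apply/permP => a; rewrite !count_cat; lia.
apply: (der_perm (IH _ _ HV HD2)); by rewrite -catA perm_cat2l perm_sym.
Qed.

Lemma sup_ctx_refl B P : sup_ctx B P (map Atom P).
Proof.
elim: P => [|p [|a P] IH] //=; first exact: der_ref.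
by exists [:: p], (a :: P); split => //; split => //; exact: der_ref.
Qed.

Theorem mainTheorem8 (B : base) (P S : seq atom) (q : atom) :
  derivable B (P ++ S) q <-> inf B S (map Atom P) (Atom q).
Proof.
case: P => [|p P] //=; split.
- move=> HD X U hX HU; exact: (@derivable_of_sup_ctx X (p :: P) S U q HU (der_mono hX HD)).
- move=> H; have /= HD := H B (p :: P) (fun r h => h) (sup_ctx_refl B (p :: P)).
  by apply: (der_perm HD); rewrite perm_catC.
Qed.
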